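(* Let $\mathtt{a}\in\Sigma$ and $p,q,k\in\mathbb{N}$ with $p,q,k\ge 1$. If $\mathtt{a}^p\equiv_{k+3}\mathtt{a}^q$, then $w^p\equiv_k w^q$ for every primitive word $w\in\Sigma^+$.
   Context: $\Sigma$ is a fixed finite alphabet. A word $w\in\Sigma^+$ is primitive if there is no $z\in\Sigma^*$ and $k>1$ with $w=z^k$. For $w \in \Sigma^*$, $\mathsf{Facs}(w)$ is the set of all factors (contiguous subwords, including $\varepsilon$ and $w$) of $w$. The structure $\mathfrak{A}_w$ representing $w$ has universe $\mathsf{Facs}(w)\cup\{\perp\}$, a ternary relation $R_\circ=\{(x,y,z)\in\mathsf{Facs}(w)^3 : x=y\cdot z\}$, for each letter $\mathtt{a}\in\Sigma$ a constant interpreted as $\mathtt{a}$ if $\mathtt{a}$ occurs in $w$ and as $\perp$ otherwise, and a constant $\varepsilon$ interpreted as the empty word. The $k$-round Ehrenfeucht–Fraïssé game on $\mathfrak{A}_w,\mathfrak{A}_v$: in each round $i$, Spoiler picks one of the two structures and an element of its universe, Duplicator answers with an element of the other structure's universe; let $a_i$ (in $\mathfrak{A}_w$) and $b_i$ (in $\mathfrak{A}_v$) be the chosen elements. Duplicator wins if the tuples $(a_1,\dots,a_k,\vec c^{\,\mathfrak{A}_w})$ and $(b_1,\dots,b_k,\vec c^{\,\mathfrak{A}_v})$, where $\vec c$ lists the interpretations of all constants, form a partial isomorphism: for all indices $i,j,l$, $a_i$ equals the interpretation of a constant $c$ iff $b_i$ equals the interpretation of $c$; $a_i=a_j$ iff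 $b_i=b_j$; and $a_i=a_j\cdot a_l$ iff $b_i=b_j\cdot b_l$. We write $w\equiv_k v$ if Duplicator has a winning strategy in the $k$-round game. *)

From mathcomp Require Import all_boot.
Set Implicit Arguments. Unset Strict Implicit. Unset Printing Implicit Defensive.

Definition wpow (Sigma : eqType) (w : seq Sigma) (n : nat) : seq Sigma :=
  flatten (nseq n w).

Definition primitive (Sigma : eqType) (w : seq Sigma) : Prop :=
  w <> [::] /\ forall (z : seq Sigma) (k : nat), 1 < k -> w <> wpow z k.

(* Elements of the structure A_w: [Some u] is the factor u, [None] is bottom. *)
Definition elt (Sigma : eqType) := option (seq Sigma).

Definition in_univ (Sigma : eqType) (w : seq Sigma) (x : elt Sigma) : bool :=
  match x with None => true | Some u => infix u w end.

Definition Rcat (Sigma : eqType) (x y z : elt Sigma) : bool :=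
  match x, y, z with
  | Some u, Some s, Some t => u == s ++ t
  | _, _, _ => false
  end.

Definition const_letter (Sigma : eqType) (w : seq Sigma) (c : Sigma) : elt Sigma :=
  if c \in w then Some [:: c] else None.

Definition consts (Sigma : finType) (w : seq Sigma) : seq (elt Sigma) :=
  Some [::] :: [seq const_letter w c | c <- enum Sigma].

Definition partial_iso (Sigma : finType) (w v : seq Sigma)
  (as_ bs : seq (elt Sigma)) : Prop :=
  let A := as_ ++ consts w in
  let B := bs ++ consts v in
  forall i j l : nat, i < size A -> j < size A -> l < size A ->
    ((nth None A i == nth None A j) = (nth None B i == nth None B j)) /\
    (Rcat (nth None A i) (nth None A j) (nth None A l) =
     Rcat (nth None B i) (nth None B j) (nth None B l)).

(* Duplicator wins the remaining k-round game from position [pos]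
   (list of pairs (a_i, b_i) chosen so far). *)
Fixpoint dup_wins (Sigma : finType) (w v : seq Sigma) (k : nat)
  (pos : seq (elt Sigma * elt Sigma)) : Prop :=
  match k with
  | 0 => partial_iso w v (map fst pos) (map snd pos)
  | k'.+1 =>
      (forall a, in_univ w a -> exists2 b, in_univ v b & dup_wins w v k' ((a, b) :: pos)) /\
      (forall b, in_univ v b -> exists2 a, in_univ w a & dup_wins w v k' ((a, b) :: pos))
  end.

Definition ef_equiv (Sigma : finType) (k : nat) (w v : seq Sigma) : Prop :=
  dup_wins w v k [::].

From mathcomp Require Import all_boot zify.
Set Implicit Arguments. Unset Strict Implicit. Unset Printing Implicit Defensive.

(* Duplicator plays the k-round game on w^p, w^q by simulating a
   game on a^p, a^q.  Every factor of w^p is seg r (m|w| + e): a phase r < |w|,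
   m full blocks and a residue e < |w|.  Duplicator answers it by
   seg r (m'|w| + e), where a^m' answers a^m in the unary game.  For primitive
   w, equality and concatenation of such factors depend only on phases,
   residues and the relations m1 = m2, m = 0, m1 = m2 + m3, m1 = m2 + m3 + 1
   between block counts (seg_eq, seg_cat).  The unary game preserves the first
   three in any consistent position and the last one given a spare round
   (upair_add1); spare rounds also make the answer fit into w^q (upair_room_le). *)

Lemma len_eq n m1 e1 m2 e2 : e1 < n -> e2 < n ->
  (m1 * n + e1 == m2 * n + e2) = (m1 == m2) && (e1 == e2).
Proof.
move=> lt1 lt2; apply/eqP/andP => [eq_L|[/eqP-> /eqP->]//].
have n_gt0 : 0 < n by lia.
have /eqP : (m1 * n + e1) %/ n = (m2 * n + e2) %/ n by rewrite eq_L.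
have /eqP : (m1 * n + e1) %% n = (m2 * n + e2) %% n by rewrite eq_L.
by rewrite !modnMDl !divnMDl // !modn_small // !divn_small // !addn0.
Qed.

Lemma len_sumE n mu eu ms es mt et : eu < n -> es < n -> et < n ->
  (mu * n + eu == ms * n + es + (mt * n + et)) =
  (es + et == eu) && (mu == ms + mt) || (es + et == eu + n) && (mu == ms + mt + 1).
Proof.
move=> ltu lts ltt.
have [no_carry|carry] := ltnP (es + et) n.
  have -> : ms * n + es + (mt * n + et) = (ms + mt) * n + (es + et) by lia.
  have -> : (es + et == eu + n) = false by apply/eqP; lia.
  by rewrite len_eq //= orbF andbC [eu == _]eq_sym.
have -> : ms * n + es + (mt * n + et) = (ms + mt + 1) * n + (es + et - n).
  by rewrite mulnDl mul1n; lia.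
rewrite len_eq //; last by lia.
have -> : (es + et == eu) = false by apply/eqP; lia.
have -> : (eu == es + et - n) = (es + et == eu + n) by apply/eqP/eqP; lia.
by rewrite andbC.
Qed.

(* Number of block boundaries crossed beyond the m full blocks by a factor of
   length m n + e starting at phase r < n. *)
Definition blocks (n r e : nat) : nat := (0 < r + e) + (n < r + e).
Lemma fits_blocks n r e m p : r < n -> e < n ->
  (r + (m * n + e) <= p * n) = (m + blocks n r e <= p).
Proof.
move=> lt_r lt_e; rewrite /blocks.
have [m_le|p_lt] := leqP (m + ((0 < r + e) + (n < r + e))) p.
  have : (m + ((0 < r + e) + (n < r + e))) * n <= p * n by rewrite leq_mul2r m_le orbT.
  case: (posnP (r + e)) => [z|pos]; case: ltnP => c /=; nia.
apply/negbTE; rewrite -ltnNge.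
have : p.+1 * n <= (m + ((0 < r + e) + (n < r + e))) * n by rewrite leq_mul2r p_lt orbT.
case: (posnP (r + e)) => [z|pos]; case: ltnP => c /=; nia.
Qed.

Section CyclicFactors.
Variables (S : eqType) (x0 : S) (w : seq S).
Local Notation n := (size w).

Definition cyc (i : nat) : S := nth x0 w (i %% n).

Definition seg (r L : nat) : seq S := mkseq (fun i => cyc (r + i)) L.

Lemma size_seg r L : size (seg r L) = L.
Proof. by rewrite size_mkseq. Qed.

Lemma nth_seg y r L i : i < L -> nth y (seg r L) i = cyc (r + i).
Proof. by move=> lt_iL; rewrite nth_mkseq. Qed.

Lemma cyc_mod i j : i = j %[mod n] -> cyc i = cyc j.
Proof. by rewrite /cyc => ->. Qed.

Lemma seg_mod r1 r2 L : r1 = r2 %[mod n] -> seg r1 L = seg r2 L.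
Proof. by move=> eq_r; apply: eq_mkseq => i; apply: cyc_mod; rewrite -modnDml eq_r modnDml. Qed.

Lemma seg_split r L1 L2 : seg r (L1 + L2) = seg r L1 ++ seg (r + L1) L2.
Proof.
rewrite /seg /mkseq iotaD map_cat add0n; congr (_ ++ _).
by rewrite -[L1 in iota L1]addn0 iotaDl -map_comp; apply: eq_map => i /=; rewrite addnA.
Qed.

Lemma seg_catE ru rs rt Lu Ls Lt :
  (seg ru Lu == seg rs Ls ++ seg rt Lt) =
  [&& Lu == Ls + Lt, seg ru Ls == seg rs Ls & seg (ru + Ls) Lt == seg rt Lt].
Proof.
have [-> /=|neq_L] := eqVneq Lu (Ls + Lt).
  by rewrite seg_split eqseq_cat ?size_seg.
by apply/eqP => /(congr1 size); rewrite size_cat !size_seg => /eqP; rewrite (negbTE neq_L).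
Qed.

Lemma size_wpow p : size (wpow w p) = p * n.
Proof. by elim: p => [//|p IH]; rewrite /wpow /= size_cat -/(wpow w p) IH mulSn. Qed.

Lemma nth_wpow p i : i < p * n -> nth x0 (wpow w p) i = cyc i.
Proof.
elim: p i => [//|p IH] i; rewrite mulSn => lt_i; rewrite /wpow /= nth_cat -/(wpow w p).
case: ltnP => le_ni; first by rewrite /cyc modn_small.
rewrite IH; last by lia.
by apply: cyc_mod; rewrite -{2}(subnK le_ni) modnDr.
Qed.

Lemma mem_wpow p c : 0 < p -> (c \in wpow w p) = (c \in w).
Proof.
case: p => // p _; elim: p => [|p IH]; first by rewrite /wpow /= cats0.
by rewrite /wpow /= mem_cat -/(wpow w p.+1) IH orbb.
Qed.

Lemma infix_wpowP p x : 0 < n ->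
  infix x (wpow w p) <-> exists2 r, r < n & r + size x <= p * n /\ x = seg r (size x).
Proof.
move=> n_gt0; split.
  case/infixP=> s [s' def_wp].
  have size_wp : size (wpow w p) = size s + size x + size s'.
    by rewrite def_wp !size_cat addnA.
  exists (size s %% n); first by rewrite ltn_mod.
  split; first by rewrite -size_wpow size_wp; have := leq_mod (size s) n; lia.
  rewrite (@seg_mod _ (size s)); last by rewrite modn_mod.
  apply: (@eq_from_nth _ x0); first by rewrite size_seg.
  move=> i lt_i; rewrite nth_seg // -(@nth_wpow p); last by rewrite -size_wpow size_wp; lia.
  by rewrite def_wp nth_cat ifF ?addKn ?nth_cat ?lt_i //; lia.
case=> r lt_r [fits ->].
have -> : seg r (size x) = take (size x) (drop r (wpow w p)).
  apply: (@eq_from_nth _ x0).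
    by rewrite size_seg size_take size_drop size_wpow; case: ltnP; lia.
  move=> i; rewrite size_seg => lt_i.
  by rewrite nth_seg // nth_take // nth_drop nth_wpow //; lia.
exact: infix_trans (infix_take _ _) (infix_drop _ _).
Qed.

Lemma seg_letter c : c \in w -> seg (index c w) 1 = [:: c].
Proof. by move=> w_c; rewrite /seg /mkseq /= /cyc addn0 modn_small ?index_mem ?nth_index. Qed.

Lemma factor_decomp p x : 0 < n -> infix x (wpow w p) ->
  exists r e m, [/\ r < n, e < n, m + blocks n r e <= p & x = seg r (m * n + e)].
Proof.
move=> n_gt0 /(infix_wpowP _ _ n_gt0)[r lt_r [fits def_x]].
exists r, (size x %% n), (size x %/ n); rewrite -fits_blocks ?ltn_mod // -divn_eq.
by split; rewrite ?ltn_mod.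
Qed.

Lemma infix_seg p r e m : r < n -> e < n -> m + blocks n r e <= p ->
  infix (seg r (m * n + e)) (wpow w p).
Proof.
move=> lt_r lt_e fits; apply/infix_wpowP => //; first by case: (n) lt_r.
by exists r => //; rewrite size_seg fits_blocks.
Qed.

End CyclicFactors.

Section Periods.
Variables (T : Type) (f : nat -> T).

Definition period (d : nat) : Prop := forall i, f (i + d) = f i.

Lemma periodM d c : period d -> period (d * c).
Proof.
move=> per_d; elim: c => [|c IH] i; first by rewrite muln0 addn0.
by rewrite mulnSr addnA per_d IH.
Qed.

(* Bezout: periods d and m of an infinite sequence give the period gcd d m. *)
Lemma period_gcd d m : 0 < d -> period d -> period m -> period (gcdn d m).
Proof.
move=> d_gt0 per_d per_m i; have [u _ /dvdnP[c def_dc]] := Bezoutl m d_gt0.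
by rewrite -(periodM u per_m) -addnA [m * u]mulnC def_dc mulnC (periodM c per_d).
Qed.

Lemma period_mod g : period g -> forall i, f i = f (i %% g).
Proof. by move=> per_g i; rewrite {1}(divn_eq i g) addnC mulnC (periodM _ per_g). Qed.

End Periods.

Section Primitive.
Variables (S : eqType) (x0 : S) (w : seq S).
Local Notation n := (size w).
Local Notation seg := (seg x0 w).

Lemma cyc_period : period (cyc x0 w) n.
Proof. by move=> i; apply: cyc_mod; rewrite modnDr. Qed.

Lemma wpow_of_period g : 0 < n -> 0 < g -> g %| n -> period (cyc x0 w) g ->
  w = wpow (take g w) (n %/ g).
Proof.
move=> n_gt0 g_gt0 g_dvd per_g; have g_le : g <= n by exact: dvdn_leq.
have size_pre : size (take g w) = g by rewrite size_take; case: ltnP; lia.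
apply: (@eq_from_nth _ x0); first by rewrite size_wpow size_pre divnK.
move=> i lt_i; rewrite nth_wpow; last by rewrite size_pre divnK.
have lt_ig : i %% g < n by have := ltn_pmod i g_gt0; lia.
rewrite /cyc size_pre nth_take ?ltn_mod //.
by rewrite -[in LHS](modn_small lt_i) -[in RHS](modn_small lt_ig); exact: (period_mod per_g i).
Qed.

Hypothesis prim : primitive w.

Lemma primitive_size_gt0 : 0 < n.
Proof. by case: prim; case: (w). Qed.

Lemma primitive_no_period d : 0 < d < n -> ~ period (cyc x0 w) d.
Proof.
case/andP=> d_gt0 lt_dn per_d; have per_g := period_gcd d_gt0 per_d cyc_period.
have g_gt0 : 0 < gcdn d n by rewrite gcdn_gt0 d_gt0.
have g_le_d : gcdn d n <= d by apply: dvdn_leq => //; exact: dvdn_gcdl.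
have g_dvd : gcdn d n %| n := dvdn_gcdr d n.
apply: (prim.2 (take (gcdn d n) w) (n %/ gcdn d n)).
  by rewrite ltn_divRL //; lia.
exact: wpow_of_period primitive_size_gt0 _ _ _.
Qed.

Lemma seg_full_inj r1 r2 : r1 < n -> r2 < n -> seg r1 n = seg r2 n -> r1 = r2.
Proof.
wlog le_r : r1 r2 / r1 <= r2.
  by move=> H lt1 lt2 eq_seg; case: (leqP r1 r2) => [|/ltnW] le; [|symmetry]; apply: H.
move=> lt1 lt2 eq_seg; apply/eqP; rewrite eqn_leq le_r leqNgt; apply/negP => lt_r12.
apply: (@primitive_no_period (r2 - r1)); first by apply/andP; split; lia.
move=> i; set j := (i + n - r1) %% n.
have eq_j : forall k, k < n -> cyc x0 w (r1 + k) = cyc x0 w (r2 + k).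
  by move=> k lt_k; rewrite -(nth_seg x0 w x0 r1 lt_k) eq_seg nth_seg.
have -> : cyc x0 w i = cyc x0 w (r1 + j).
  by apply: cyc_mod; rewrite modnDmr addnC subnK ?modnDr //; lia.
have -> : cyc x0 w (i + (r2 - r1)) = cyc x0 w (r2 + j).
  by apply: cyc_mod; rewrite modnDmr -modnDr; congr (_ %% _); lia.
by apply/esym/eq_j; rewrite ltn_mod primitive_size_gt0.
Qed.

(* Comparison of two factors of the same length m|w| + e starting at phases r1, r2:
   for m > 0 they agree iff the phases agree. *)
Definition seg_agree (r1 r2 m e : nat) : bool :=
  if m == 0 then seg r1 e == seg r2 e else r1 == r2.

Lemma seg_agree_zero r1 r2 m m' e : (m == 0) = (m' == 0) ->
  seg_agree r1 r2 m e = seg_agree r1 r2 m' e.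
Proof. by rewrite /seg_agree => ->. Qed.

Lemma seg_eq_len r1 r2 m e : r1 < n -> r2 < n ->
  (seg r1 (m * n + e) == seg r2 (m * n + e)) = seg_agree r1 r2 m e.
Proof.
move=> lt1 lt2; rewrite /seg_agree; have [->|m_neq0] := eqVneq m 0; first by rewrite mul0n.
apply/eqP/eqP => [|-> //].
have -> : m * n + e = n + (m.-1 * n + e) by case: m m_neq0 => // m _; rewrite mulSn addnA.
rewrite !seg_split => /eqP; rewrite eqseq_cat ?size_seg // => /andP[/eqP eq_seg _].
exact: seg_full_inj.
Qed.

Lemma seg_eq r1 r2 m1 e1 m2 e2 : r1 < n -> r2 < n -> e1 < n -> e2 < n ->
  (seg r1 (m1 * n + e1) == seg r2 (m2 * n + e2)) = [&& m1 == m2, e1 == e2 & seg_agree r1 r2 m1 e1].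
Proof.
move=> lt1 lt2 lte1 lte2; have := len_eq m1 m2 lte1 lte2.
have [eq_len|neq_len] := boolP (m1 * n + e1 == m2 * n + e2).
  by move=> /esym/andP[/eqP<- /eqP<-]; rewrite !eqxx seg_eq_len.
rewrite andbA => <-.
by apply/negbTE; apply: contra neq_len => /eqP/(congr1 size); rewrite !size_seg => ->.
Qed.

Lemma seg_cat ru rs rt mu eu ms es mt et :
  ru < n -> rs < n -> rt < n -> eu < n -> es < n -> et < n ->
  (seg ru (mu * n + eu) == seg rs (ms * n + es) ++ seg rt (mt * n + et)) =
  [&& (es + et == eu) && (mu == ms + mt) || (es + et == eu + n) && (mu == ms + mt + 1),
      seg_agree ru rs ms es & seg_agree ((ru + es) %% n) rt mt et].
Proof.
move=> ltu lts ltt lteu ltes ltet; rewrite seg_catE len_sumE // seg_eq_len //.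
rewrite (@seg_mod _ _ _ _ ((ru + es) %% n)) ?seg_eq_len ?ltn_mod ?primitive_size_gt0 //.
by rewrite modn_mod addnCA modnMDl.
Qed.

End Primitive.

Section Game.
Variables (S : finType) (w v : seq S).
Implicit Types (pos : seq (elt S * elt S)).

Definition pairs pos : seq (elt S * elt S) := pos ++ zip (consts w) (consts v).

Definition in_univ2 pos : Prop := forall x, x \in pos -> in_univ w x.1 && in_univ v x.2.

Definition consistent pos : Prop :=
  forall x y z, x \in pairs pos -> y \in pairs pos -> z \in pairs pos ->
    ((x.1 == y.1) = (x.2 == y.2)) /\ (Rcat x.1 y.1 z.1 = Rcat x.2 y.2 z.2).

Lemma zip_consts : zip (consts w) (consts v) =
  (Some [::], Some [::]) :: [seq (const_letter w c, const_letter v c) | c <- enum S].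
Proof. by rewrite /consts /= zip_map. Qed.

Lemma size_consts : size (consts w) = size (consts v).
Proof. by rewrite /consts /= !size_map. Qed.

Lemma partial_isoP pos : partial_iso w v (map fst pos) (map snd pos) <-> consistent pos.
Proof.
rewrite /partial_iso /consistent.
have -> : map fst pos ++ consts w = map fst (pairs pos).
  rewrite map_cat; congr (_ ++ _); symmetry.
  exact: (@unzip1_zip _ _ _ (consts v)) (eq_leq size_consts).
have -> : map snd pos ++ consts v = map snd (pairs pos).
  rewrite map_cat; congr (_ ++ _); symmetry.
  exact: (@unzip2_zip _ _ (consts w)) (eq_leq (esym size_consts)).
rewrite size_map; set P := pairs pos.
have nth_fst i : i < size P -> nth None (map fst P) i = (nth (None, None) P i).1.
  by move=> lt_i; rewrite (nth_map (None, None)).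
have nth_snd i : i < size P -> nth None (map snd P) i = (nth (None, None) P i).2.
  by move=> lt_i; rewrite (nth_map (None, None)).
split=> [iso x y z Px Py Pz|cons i j l lt_i lt_j lt_l].
  have := iso (index x P) (index y P) (index z P); rewrite !index_mem Px Py Pz.
  by rewrite !nth_fst ?index_mem // !nth_snd ?index_mem // !nth_index //; apply.
by rewrite !nth_fst // !nth_snd //; apply: cons; apply: mem_nth.
Qed.

Lemma pairs_sub pos1 pos2 : {subset pos1 <= pos2} -> {subset pairs pos1 <= pairs pos2}.
Proof. by move=> sub x; rewrite !mem_cat => /orP[/sub ->|->]; rewrite ?orbT. Qed.

Lemma pairs_head x pos : x \in pairs (x :: pos).
Proof. by rewrite mem_cat inE eqxx. Qed.

Lemma pairs_cons x pos : {subset pairs pos <= pairs (x :: pos)}.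
Proof. by apply: pairs_sub => y pos_y; rewrite inE pos_y orbT. Qed.

Lemma dup_wins_consistent k pos : dup_wins w v k pos -> consistent pos.
Proof.
elim: k pos => [|k IH] pos /=; first by move/partial_isoP.
case=> [forth _]; have [b _ /IH cons] := forth None isT.
by move=> x y z Px Py Pz; apply: cons; apply: pairs_cons.
Qed.

Lemma dup_wins_le k pos : dup_wins w v k.+1 pos -> dup_wins w v k pos.
Proof.
elim: k pos => [|k IH] pos win; first exact/partial_isoP/(dup_wins_consistent win).
case: win => [forth back]; split.
  by move=> x wx; have [y vy /IH] := forth x wx; exists y.
by move=> y vy; have [x wx /IH] := back y vy; exists x.
Qed.

Lemma eps_pairs pos : (Some [::], Some [::]) \in pairs pos.
Proof. by rewrite mem_cat zip_consts inE eqxx orbT. Qed.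

Lemma letter_pairs pos c : c \in w -> c \in v -> (Some [:: c], Some [:: c]) \in pairs pos.
Proof.
move=> w_c v_c; rewrite mem_cat zip_consts !inE; apply/orP; right; apply/orP; right.
by apply/mapP; exists c; rewrite ?mem_enum // /const_letter w_c v_c.
Qed.

Lemma consistent_Some pos x b : consistent pos -> (Some x, b) \in pairs pos -> exists y, b = Some y.
Proof.
move=> cons Px; have [_ cat_eps] := cons _ _ _ Px (eps_pairs pos) Px.
by case: b Px cat_eps => [y|] _ /=; [exists y | rewrite eqxx].
Qed.

Lemma in_univ_const_letter (u : seq S) c : in_univ u (const_letter u c).
Proof. by rewrite /const_letter; case: ifP => //= u_c; rewrite infix1s. Qed.

Lemma pairs_univ pos x : in_univ2 pos -> x \in pairs pos -> in_univ w x.1 && in_univ v x.2.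
Proof.
move=> univ; rewrite mem_cat => /orP[/univ //|]; rewrite zip_consts inE.
case/orP=> [/eqP-> /=|/mapP[c _ ->] /=]; first by rewrite !infix0s.
by rewrite !in_univ_const_letter.
Qed.

End Game.

Definition swap_pair (T : Type) (x : T * T) : T * T := (x.2, x.1).

Lemma swap_pairK (T : Type) : involutive (@swap_pair T).
Proof. by case. Qed.

Lemma map_swap_pairK (T : Type) (s : seq (T * T)) : map (@swap_pair T) (map (@swap_pair T) s) = s.
Proof. by rewrite -map_comp (eq_map (@swap_pairK T)) map_id. Qed.

Lemma mem_swap_pair (T : eqType) (s : seq (T * T)) x :
  (swap_pair x \in map (@swap_pair T) s) = (x \in s).
Proof. exact/mem_map/(can_inj (@swap_pairK T)). Qed.

Section Swap.
Variables (S : finType) (w v : seq S).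
Implicit Types (pos : seq (elt S * elt S)).

Lemma pairs_swap pos : pairs v w (map (@swap_pair _) pos) = map (@swap_pair _) (pairs w v pos).
Proof.
rewrite /pairs map_cat; congr (_ ++ _).
by elim: (consts w) (consts v) => [|x s IH] [|y t] //=; rewrite IH.
Qed.

Lemma mem_pairs_swap pos x :
  (swap_pair x \in pairs v w (map (@swap_pair _) pos)) = (x \in pairs w v pos).
Proof. by rewrite pairs_swap mem_swap_pair. Qed.

Lemma in_univ2_swap pos : in_univ2 w v pos -> in_univ2 v w (map (@swap_pair _) pos).
Proof. by move=> univ x; rewrite -(swap_pairK x) mem_swap_pair => /univ /=; rewrite andbC. Qed.

Lemma consistent_swap pos : consistent w v pos -> consistent v w (map (@swap_pair _) pos).
Proof.
move=> cons x y z; rewrite -(swap_pairK x) -(swap_pairK y) -(swap_pairK z) !mem_pairs_swap.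
by move=> Px Py Pz; have [-> ->] := cons _ _ _ Px Py Pz.
Qed.

Lemma dup_wins_swap k pos : dup_wins w v k pos -> dup_wins v w k (map (@swap_pair _) pos).
Proof.
elim: k pos => [|k IH] pos /=; first by move/partial_isoP/consistent_swap/partial_isoP.
case=> [forth back]; split.
  by move=> b vb; have [a wa /IH] := back b vb; exists a.
by move=> a wa; have [b vb /IH] := forth a wa; exists b.
Qed.

End Swap.

Section UnaryWords.
Variables (S : eqType) (a : S).

Lemma seg_unary r L : seg a [:: a] r L = nseq L a.
Proof.
apply: (@eq_from_nth _ a); first by rewrite size_seg size_nseq.
by move=> i; rewrite size_seg => lt_i; rewrite nth_seg // nth_nseq lt_i /cyc /= modn1.
Qed.

Lemma infix_unary p x : infix x (wpow [:: a] p) -> x = nseq (size x) a /\ size x <= p.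
Proof.
case/(infix_wpowP a) => // r _ [fits def_x].
by split; [rewrite {1}def_x seg_unary | move: fits; rewrite muln1; lia].
Qed.

Lemma infix_nseq p m : m <= p -> infix (nseq m a) (wpow [:: a] p).
Proof.
move=> le_mp; apply/(infix_wpowP a) => //; exists 0 => //.
by rewrite size_nseq muln1 add0n seg_unary.
Qed.

Lemma eq_nseq m1 m2 : (nseq m1 a == nseq m2 a) = (m1 == m2).
Proof. by apply/eqP/eqP => [/(congr1 size)|->]; rewrite ?size_nseq. Qed.

Definition upair (m m' : nat) : elt S * elt S := (Some (nseq m a), Some (nseq m' a)).

End UnaryWords.

Section UnaryGame.
Variables (S : finType) (a : S) (p q : nat).
Hypotheses (p_gt0 : 0 < p) (q_gt0 : 0 < q).
Local Notation A := (wpow [:: a] p).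
Local Notation B := (wpow [:: a] q).
Local Notation upair := (upair a).
Implicit Types (U : seq (elt S * elt S)).

Lemma upair_eq U m1 m1' m2 m2' : consistent A B U ->
  upair m1 m1' \in pairs A B U -> upair m2 m2' \in pairs A B U -> (m1 == m2) = (m1' == m2').
Proof.
move=> cons P1 P2; have [/= + _] := cons _ _ _ P1 P2 P1.
by rewrite !(inj_eq Some_inj) !eq_nseq.
Qed.

Lemma upair_zero U m m' : consistent A B U -> upair m m' \in pairs A B U -> (m == 0) = (m' == 0).
Proof. by move=> cons Pm; apply: upair_eq cons Pm (eps_pairs A B U : upair 0 0 \in _). Qed.

Lemma upair_add U m1 m1' m2 m2' m3 m3' : consistent A B U ->
  upair m1 m1' \in pairs A B U -> upair m2 m2' \in pairs A B U -> upair m3 m3' \in pairs A B U ->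
  (m1 == m2 + m3) = (m1' == m2' + m3').
Proof. by move=> cons P1 P2 P3; have [_ /=] := cons _ _ _ P1 P2 P3; rewrite -!nseqD !eq_nseq. Qed.

Lemma letter_upair U : upair 1 1 \in pairs A B U.
Proof. by apply: letter_pairs; rewrite mem_wpow // inE. Qed.

Lemma in_univ2_upair U m m' : m <= p -> m' <= q -> in_univ2 A B U -> in_univ2 A B (upair m m' :: U).
Proof.
move=> le_mp le_mq univ x; rewrite inE => /orP[/eqP-> /=|/univ //].
by rewrite !infix_nseq.
Qed.

Lemma unary_answer s U m : dup_wins A B s.+1 U -> m <= p ->
  exists2 m', m' <= q & dup_wins A B s (upair m m' :: U).
Proof.
case=> [forth _] le_mp; have [b Bb win] := forth (Some (nseq m a)) (infix_nseq a le_mp).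
have [y def_b] := consistent_Some (dup_wins_consistent win) (pairs_head _ _ _ _).
move: Bb win; rewrite def_b /= => /infix_unary[def_y le_yq] win.
by exists (size y) => //; rewrite /upair -def_y.
Qed.

Lemma upair_succ s U m m' : dup_wins A B s.+1 U -> upair m m' \in pairs A B U -> m < p ->
  m' < q /\ dup_wins A B s (upair m.+1 m'.+1 :: U).
Proof.
move=> win Pm lt_mp; have [m'' le_m''q win'] := unary_answer win lt_mp.
have cons := dup_wins_consistent win'.
have := upair_add cons (pairs_head _ _ _ _) (pairs_cons _ Pm) (letter_upair _).
by rewrite !addn1 eqxx => /esym/eqP def_m''; rewrite -def_m''; split.
Qed.

Lemma upair_room c s U m m' : c < s -> dup_wins A B s U ->
  upair m m' \in pairs A B U -> m + c < p -> m' + c < q.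
Proof.
elim: c s U m m' => [|c IH] [//|s] U m m' lt_cs win Pm lt_mcp.
  by rewrite !addn0 in lt_mcp *; have [] := upair_succ win Pm lt_mcp.
have [_ win'] := upair_succ win Pm (leq_ltn_trans (leq_addr _ _) lt_mcp).
by rewrite addnS -addSn (IH s _ m.+1 m'.+1 lt_cs win' (pairs_head _ _ _ _)) // addSn -addnS.
Qed.

Lemma upair_bound U m m' : in_univ2 A B U -> upair m m' \in pairs A B U -> m <= p /\ m' <= q.
Proof.
move=> univ /(pairs_univ univ) /andP[/infix_unary[_ le_mp] /infix_unary[_ le_mq]].
by rewrite !size_nseq in le_mp le_mq.
Qed.

(* The same with c <= s, the case c = 0 coming from the universes. *)
Lemma upair_room_le c s U m m' : c <= s -> dup_wins A B s U -> in_univ2 A B U ->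
  upair m m' \in pairs A B U -> m + c <= p -> m' + c <= q.
Proof.
case: c => [|c] le_cs win univ Pm; first by rewrite !addn0 => _; case: (upair_bound univ Pm).
by rewrite !addnS; apply: upair_room le_cs win Pm.
Qed.

Lemma upair_add1_dir s U m1 m1' m2 m2' m3 m3' :
  dup_wins A B s.+1 U -> in_univ2 A B U -> upair m1 m1' \in pairs A B U ->
  upair m2 m2' \in pairs A B U -> upair m3 m3' \in pairs A B U ->
  m1 = m2 + m3 + 1 -> m1' = m2' + m3' + 1.
Proof.
move=> win univ P1 P2 P3 def_m1; have [le_m1p _] := upair_bound univ P1.
have [_ win'] := upair_succ win P3 (ltac:(lia) : m3 < p).
have cons := dup_wins_consistent win'.
have := upair_add cons (pairs_cons _ P1) (pairs_cons _ P2) (pairs_head _ _ _ _).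
by rewrite def_m1 addn1 addnS eqxx => /esym/eqP->; rewrite addnS addn1.
Qed.

End UnaryGame.

Lemma upair_swap (S : finType) (w v : seq S) (a : S) U m m' :
  upair a m m' \in pairs w v U -> upair a m' m \in pairs v w (map (@swap_pair _) U).
Proof. by rewrite -mem_pairs_swap. Qed.

Lemma upair_add1 (S : finType) (a : S) p q s U m1 m1' m2 m2' m3 m3' : 0 < p -> 0 < q ->
  dup_wins (wpow [:: a] p) (wpow [:: a] q) s.+1 U -> in_univ2 (wpow [:: a] p) (wpow [:: a] q) U ->
  upair a m1 m1' \in pairs (wpow [:: a] p) (wpow [:: a] q) U ->
  upair a m2 m2' \in pairs (wpow [:: a] p) (wpow [:: a] q) U ->
  upair a m3 m3' \in pairs (wpow [:: a] p) (wpow [:: a] q) U ->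
  (m1 == m2 + m3 + 1) = (m1' == m2' + m3' + 1).
Proof.
move=> p_gt0 q_gt0 win univ P1 P2 P3; apply/eqP/eqP.
  exact: (upair_add1_dir p_gt0 q_gt0 win univ P1 P2 P3).
exact: (upair_add1_dir q_gt0 p_gt0 (dup_wins_swap win) (in_univ2_swap univ)
  (upair_swap P1) (upair_swap P2) (upair_swap P3)).
Qed.

Section Simulation.
Variables (S : finType) (a : S) (w : seq S) (p q : nat).
Hypotheses (prim : primitive w) (p_gt0 : 0 < p) (q_gt0 : 0 < q).
Local Notation n := (size w).
Local Notation A := (wpow [:: a] p).
Local Notation B := (wpow [:: a] q).
Local Notation seg := (seg a w).
Implicit Types (pos U : seq (elt S * elt S)).

Let n_gt0 : 0 < n := primitive_size_gt0 prim.

Definition fpair (r e m m' : nat) : elt S * elt S :=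
  (Some (seg r (m * n + e)), Some (seg r (m' * n + e))).

Definition related U (x : elt S * elt S) : Prop :=
  x = (None, None) \/ exists r e m m',
    [/\ r < n, e < n, x = fpair r e m m' & upair a m m' \in pairs A B U].

Definition invariant j pos U : Prop :=
  [/\ dup_wins A B (j + 2) U, in_univ2 A B U & forall x, x \in pos -> related U x].

Lemma related_sub U U' x : {subset U <= U'} -> related U x -> related U' x.
Proof.
move=> sub [->|[r [e [m [m' [lt_r lt_e -> Pm]]]]]]; [by left | right].
by exists r, e, m, m'; split => //; apply: pairs_sub Pm.
Qed.

Lemma related_consts U x : x \in zip (consts (wpow w p)) (consts (wpow w q)) -> related U x.
Proof.
rewrite zip_consts inE => /orP[/eqP->|/mapP[c _ ->]].
  by right; exists 0, 0, 0, 0; split; rewrite ?eps_pairs.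
rewrite /const_letter !mem_wpow //; case: ifP => w_c; [right | by left].
have lt_c : index c w < n by rewrite index_mem.
have [n_eq1|n_gt1] := eqVneq n 1.
  exists (index c w), 0, 1, 1; split => //; last exact: letter_upair.
  by rewrite /fpair n_eq1 addn0 seg_letter.
exists (index c w), 1, 0, 0; split; rewrite ?eps_pairs //.
  by rewrite ltn_neqAle eq_sym n_gt1.
by rewrite /fpair mul0n add0n seg_letter.
Qed.

Lemma related_eq U x y : consistent A B U -> related U x -> related U y ->
  (x.1 == y.1) = (x.2 == y.2).
Proof.
move=> cons [->|[r1 [e1 [m1 [m1' [lt_r1 lt_e1 -> P1]]]]]].
  by case=> [->|[? [? [? [? [_ _ -> _]]]]]].
case=> [-> //|[r2 [e2 [m2 [m2' [lt_r2 lt_e2 -> P2]]]]]].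
rewrite /= !(inj_eq Some_inj) !seg_eq // (upair_eq cons P1 P2).
by rewrite (seg_agree_zero _ _ _ _ _ (upair_zero cons P1)).
Qed.

Lemma related_cat U x y z : dup_wins A B 1 U -> in_univ2 A B U ->
  related U x -> related U y -> related U z -> Rcat x.1 y.1 z.1 = Rcat x.2 y.2 z.2.
Proof.
move=> win univ [->|[r1 [e1 [m1 [m1' [lt_r1 lt_e1 -> P1]]]]]] //.
case=> [->|[r2 [e2 [m2 [m2' [lt_r2 lt_e2 -> P2]]]]]]; first by case: z.1 z.2 => [?|] [?|].
case=> [->|[r3 [e3 [m3 [m3' [lt_r3 lt_e3 -> P3]]]]]] //.
have cons := dup_wins_consistent win.
rewrite /= !seg_cat // ?ltn_mod ?n_gt0 // (upair_add cons P1 P2 P3).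
rewrite (upair_add1 p_gt0 q_gt0 win univ P1 P2 P3).
rewrite (seg_agree_zero _ _ _ _ _ (upair_zero cons P2)).
by rewrite (seg_agree_zero _ _ _ _ _ (upair_zero cons P3)).
Qed.

Lemma invariant_partial_iso pos U : invariant 0 pos U ->
  partial_iso (wpow w p) (wpow w q) (map fst pos) (map snd pos).
Proof.
case=> [win univ rel]; apply/partial_isoP.
have rel_pairs x : x \in pairs (wpow w p) (wpow w q) pos -> related U x.
  by rewrite mem_cat => /orP[/rel|/related_consts].
move=> x y z /rel_pairs Rx /rel_pairs Ry /rel_pairs Rz; split.
  exact: related_eq (dup_wins_consistent win) Rx Ry.
exact: related_cat (dup_wins_le win) univ Rx Ry Rz.
Qed.

Lemma invariant_forth j pos U u : invariant j.+1 pos U -> in_univ (wpow w p) u ->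
  exists2 u', in_univ (wpow w q) u' & exists U', invariant j ((u, u') :: pos) U'.
Proof.
case=> [win univ rel] Au; case: u Au => [x|] Ax; last first.
  exists None => //; exists U; split; [exact: dup_wins_le | by [] |].
  by move=> y; rewrite inE => /orP[/eqP-> | /rel]; [left |].
have [r [e [m [lt_r lt_e fits def_x]]]] := factor_decomp a n_gt0 Ax.
have [m' le_m'q win'] := unary_answer win (leq_trans (leq_addr _ _) fits).
have univ' := in_univ2_upair (leq_trans (leq_addr _ _) fits) le_m'q univ.
have fits' : m' + blocks n r e <= q.
  have le_blocks : blocks n r e <= j + 2.
    exact: leq_trans (leq_add (leq_b1 _) (leq_b1 _)) (leq_addl j 2).
  exact: (upair_room_le p_gt0 q_gt0 le_blocks win' univ' (pairs_head _ _ _ _) fits).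
exists (Some (seg r (m' * n + e))); first exact: infix_seg.
exists (upair a m m' :: U); split => // y; rewrite inE => /orP[/eqP->|/rel].
  by right; exists r, e, m, m'; split; rewrite ?pairs_head ?def_x.
by apply: related_sub => z U_z; rewrite inE U_z orbT.
Qed.

End Simulation.

Lemma related_swap (S : finType) (a : S) w p q U x :
  related a w p q U x -> related a w q p (map (@swap_pair _) U) (swap_pair x).
Proof.
case=> [->|[r [e [m [m' [lt_r lt_e -> Pm]]]]]]; [by left | right].
by exists r, e, m', m; split => //; apply: upair_swap.
Qed.

Lemma invariant_swap (S : finType) (a : S) w p q j pos U : invariant a w p q j pos U ->
  invariant a w q p j (map (@swap_pair _) pos) (map (@swap_pair _) U).
Proof.
case=> [win univ rel]; split; [exact: dup_wins_swap | exact: in_univ2_swap |].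
by move=> x; rewrite -(swap_pairK x) mem_swap_pair => /rel/related_swap.
Qed.

Lemma invariant_dup_wins (S : finType) (a : S) w p q j pos U :
  primitive w -> 0 < p -> 0 < q -> invariant a w p q j pos U ->
  dup_wins (wpow w p) (wpow w q) j pos.
Proof.
move=> prim; elim: j p q pos U => [|j IH] p q pos U p_gt0 q_gt0 inv.
  exact: invariant_partial_iso inv.
split=> [u Au|u' Bu'].
  have [u' Bu' [U' inv']] := invariant_forth prim p_gt0 q_gt0 inv Au.
  by exists u' => //; apply: IH p_gt0 q_gt0 inv'.
have [u Au [U' inv']] := invariant_forth prim q_gt0 p_gt0 (invariant_swap inv) Bu'.
exists u => //; have := IH _ _ _ _ p_gt0 q_gt0 (invariant_swap inv').
by rewrite /= map_swap_pairK.
Qed.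

Theorem lemma4p8 (Sigma : finType) (a : Sigma) (p q k : nat) :
  1 <= p -> 1 <= q -> 1 <= k ->
  ef_equiv (k + 3) (wpow [:: a] p) (wpow [:: a] q) ->
  forall w : seq Sigma, primitive w -> ef_equiv k (wpow w p) (wpow w q).
Proof.
move=> p_gt0 q_gt0 _ unary_equiv w prim.
apply: (invariant_dup_wins (a := a) prim p_gt0 q_gt0 (U := [::])).
by split=> //; apply: dup_wins_le; rewrite -addnS.
Qed.
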